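(* Let $\pi$ be a rectangular permutation. Then each of $\psi_1(\pi)$, $\psi_2(\pi)$, $\psi_u(\pi)$, $\psi_d(\pi)$ that is defined (i.e. for which $\pi$ lies in the operator's domain) is again rectangular.
   Context: A permutation is rectangular if it avoids the patterns $2413,2431,4213,4231$. For $\pi\in S_n$ (one-line form $[\pi_1\cdots\pi_n]$) and $1\le i,j\le n+1$, $\rho_{i,j}(\pi)\in S_{n+1}$ is obtained by increasing by $1$ every entry $\ge i$ and inserting the value $i$ at position $j$. Operators: $\psi_1=\rho_{1,1}$, defined on all rectangular permutations (including the empty permutation $e_0$); $\psi_2=\rho_{1,2}$, defined on rectangular $\pi$ of size $\ge1$ with $\pi_1\neq1$; $\psi_u(\pi)=\rho_{\pi_1,1}(\pi)$, defined on rectangular $\pi$ of size $\ge1$ with $\pi_1\ne1$; $\psi_d(\pi)=\rho_{\pi_1+1,1}(\pi)$, defined on rectangular $\pi$ of size $\ge1$. *)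

From mathcomp Require Import all_boot.
Set Implicit Arguments. Unset Strict Implicit. Unset Printing Implicit Defensive.

(* s is a permutation of {1,...,size s} in one-line form [s_1 ... s_n] *)
Definition is_perm (s : seq nat) : bool := perm_eq s (iota 1 (size s)).

Definition order_iso (t p : seq nat) : Prop :=
  size t = size p /\
  forall i j, i < size p -> j < size p ->
    (nth 0 t i < nth 0 t j) = (nth 0 p i < nth 0 p j).

Definition contains (s p : seq nat) : Prop :=
  exists t, subseq t s /\ order_iso t p.

Definition avoids (s p : seq nat) : Prop := ~ contains s p.

Definition rectangular (s : seq nat) : Prop :=
  [/\ avoids s [:: 2; 4; 1; 3], avoids s [:: 2; 4; 3; 1],
      avoids s [:: 4; 2; 1; 3] & avoids s [:: 4; 2; 3; 1]].

(* rho_{i,j}: increase every entry >= i by 1, insert value i at position j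
   (positions 1-indexed) *)
Definition rho (i j : nat) (s : seq nat) : seq nat :=
  let s' := map (fun x => if i <= x then x.+1 else x) s in
  take j.-1 s' ++ i :: drop j.-1 s'.

Definition psi1 (s : seq nat) := rho 1 1 s.
Definition psi2 (s : seq nat) := rho 1 2 s.
Definition psiu (s : seq nat) := rho (head 0 s) 1 s.
Definition psid (s : seq nat) := rho (head 0 s).+1 1 s.

From mathcomp Require Import all_boot zify.

Set Implicit Arguments.
Unset Strict Implicit.
Unset Printing Implicit Defensive.

(** The four forbidden patterns are exactly the shapes of the 4-term
    subsequences [a b c d] in which one of [c], [d] lies below both [a] and
    [b] and the other lies strictly between them.  Every operator first
    relabels the entries increasingly, which preserves such interleavings,
    and then inserts one new value near the front.  For psi1 and psi2 the new
    value is at most every entry after it, and such an entry can never play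
    the role of [a] or [b].  For psiu and psid the new value is adjacent to
    the relabelled first entry, so both compare in the same way with every
    later entry: an interleaving using the new value either uses both of
    them as [a], [b], leaving no room for a value strictly between, or it
    transfers to the old first entry. *)

Definition interleaves (a b c d : nat) : bool :=
  [|| [&& c < a, a < d & d < b], [&& d < a, a < c & c < b],
      [&& c < b, b < d & d < a] | [&& d < b, b < c & c < a]].

Definition interleaving_free (s : seq nat) : Prop :=
  forall a b c d, subseq [:: a; b; c; d] s -> ~~ interleaves a b c d.

Lemma interleaves_order_iso a b c d :
  interleaves a b c d ->
  [\/ order_iso [:: a; b; c; d] [:: 2; 4; 1; 3],
      order_iso [:: a; b; c; d] [:: 2; 4; 3; 1],
      order_iso [:: a; b; c; d] [:: 4; 2; 1; 3] |
      order_iso [:: a; b; c; d] [:: 4; 2; 3; 1]].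
Proof.
case/or4P=> /and3P[? ? ?]; [apply: Or41 | apply: Or42 | apply: Or43 | apply: Or44];
  by split=> // -[|[|[|[|i]]]] [|[|[|[|j]]]] //= _ _; lia.
Qed.

Lemma order_iso_interleaves a b c d a' b' c' d' :
  order_iso [:: a; b; c; d] [:: a'; b'; c'; d'] ->
  interleaves a b c d = interleaves a' b' c' d'.
Proof.
case=> _ iso; rewrite /interleaves.
by rewrite !(iso 2 0, iso 0 3, iso 3 1, iso 3 0, iso 0 2, iso 2 1, iso 1 3, iso 1 2).
Qed.

Lemma rectangularP s : rectangular s <-> interleaving_free s.
Proof.
split.
- case=> h2413 h2431 h4213 h4231 a b c d sub; apply/negP.
  by case/interleaves_order_iso=> iso;
    [apply: h2413 | apply: h2431 | apply: h4213 | apply: h4231];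
    exists [:: a; b; c; d].
- move=> free; split=> -[[|a [|b [|c [|d [|? ?]]]]] [sub iso]]; try by case: iso.
  all: by have := free a b c d sub; rewrite (order_iso_interleaves iso).
Qed.

Lemma interleaving_free_subseq s1 s2 :
  subseq s1 s2 -> interleaving_free s2 -> interleaving_free s1.
Proof. by move=> sub12 free a b c d sub1; apply/free/(subseq_trans sub1). Qed.

Lemma interleaving_free_map f s :
  {mono f : x y / x < y} -> interleaving_free s -> interleaving_free (map f s).
Proof.
move=> f_mono free a b c d /subseqP[m _]; rewrite -map_mask.
case def_t: (mask m s) => [|a' [|b' [|c' [|d' [|? ?]]]]] //= [-> -> -> ->].
by rewrite /interleaves !f_mono; apply: free; rewrite -def_t mask_subseq.
Qed.

Lemma interleaving_free_cons_min x s :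
  {in s, forall z, x <= z} -> interleaving_free s -> interleaving_free (x :: s).
Proof.
move=> x_min free a b c d /=; case: eqP => [-> | _] sub; last exact: free.
have c_s : c \in s by apply: (mem_subseq sub); rewrite !inE eqxx orbT.
have d_s : d \in s by apply: (mem_subseq sub); rewrite !inE eqxx !orbT.
by move: (x_min c c_s) (x_min d d_s); rewrite /interleaves; lia.
Qed.

Lemma interleaving_free_insert_min u x v :
  size u <= 1 -> {in v, forall z, x <= z} ->
  interleaving_free (u ++ v) -> interleaving_free (u ++ x :: v).
Proof.
case: u => [|h [|? ?]] //= _ x_min; first exact: interleaving_free_cons_min.
move=> free a b c d /=; case: eqP => [a_h | _] sub; last first.
  exact: interleaving_free_cons_min x_min
           (interleaving_free_subseq (subseq_cons v h) free) a b c d sub.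
move: sub => /=; case: eqP => [-> | _] sub; last by apply: free; rewrite /= a_h eqxx.
have c_v : c \in v by apply: (mem_subseq sub); rewrite !inE eqxx.
have d_v : d \in v by apply: (mem_subseq sub); rewrite !inE eqxx orbT.
by move: (x_min c c_v) (x_min d d_v); rewrite /interleaves; lia.
Qed.

Lemma interleaving_free_cons_twin x y s :
  {in s, forall z, (z < x) = (z < y) /\ (x < z) = (y < z)} ->
  interleaving_free (y :: s) -> interleaving_free (x :: y :: s).
Proof.
move=> twin free a b c d /=; case: eqP => [-> | _] sub; last exact: free.
move: sub => /=; case: eqP => [-> | _] sub.
  have c_s : c \in s by apply: (mem_subseq sub); rewrite !inE eqxx.
  have d_s : d \in s by apply: (mem_subseq sub); rewrite !inE eqxx orbT.
  by move: (twin c c_s) (twin d d_s); rewrite /interleaves; lia.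
have b_s : b \in s by apply: (mem_subseq sub); rewrite !inE eqxx.
have c_s : c \in s by apply: (mem_subseq sub); rewrite !inE eqxx orbT.
have d_s : d \in s by apply: (mem_subseq sub); rewrite !inE eqxx !orbT.
have := free y b c d; rewrite /= eqxx => /(_ sub).
by move: (twin b b_s) (twin c c_s) (twin d d_s); rewrite /interleaves; lia.
Qed.

Lemma ltn_bump2 h : {mono bump h : x y / x < y}.
Proof. by move=> x y; rewrite !ltnNge leq_bump2. Qed.

Lemma rhoE i j s :
  rho i j s = take j.-1 (map (bump i) s) ++ i :: drop j.-1 (map (bump i) s).
Proof.
rewrite /rho; suff -> : map (fun x => if i <= x then x.+1 else x) s = map (bump i) s by [].
by apply: eq_map => x; rewrite /bump; case: leqP.
Qed.

Lemma interleaving_free_rho_min i j s :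
  j <= 2 -> {in s, forall y, i <= y} ->
  interleaving_free s -> interleaving_free (rho i j s).
Proof.
move=> le_j2 i_min free; rewrite rhoE; apply: interleaving_free_insert_min.
- by rewrite size_take_min; lia.
- move=> _ /mem_drop /mapP[y /i_min le_iy ->]; rewrite /bump; lia.
- by rewrite cat_take_drop; apply: interleaving_free_map free; apply: ltn_bump2.
Qed.

Lemma interleaving_free_rho_twin i h t :
  (i == h) || (i == h.+1) -> h \notin t ->
  interleaving_free (h :: t) -> interleaving_free (rho i 1 (h :: t)).
Proof.
move=> i_h h_t free; rewrite rhoE /=.
apply: interleaving_free_cons_twin; last first.
  by rewrite -map_cons; apply: interleaving_free_map free; apply: ltn_bump2.
move=> _ /mapP[y y_t ->]; have y_h : y != h by apply: contraNneq h_t => <-.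
by rewrite /bump; lia.
Qed.

Theorem lemma4p1 (pi : seq nat) :
  is_perm pi -> rectangular pi ->
  [/\ rectangular (psi1 pi),
      (0 < size pi -> head 0 pi != 1 -> rectangular (psi2 pi)),
      (0 < size pi -> head 0 pi != 1 -> rectangular (psiu pi)) &
      (0 < size pi -> rectangular (psid pi))].
Proof.
move=> pi_perm /rectangularP free.
have rect_rho_head i :
  0 < size pi -> (i == head 0 pi) || (i == (head 0 pi).+1) -> rectangular (rho i 1 pi).
  case: pi pi_perm free => [|h t] //= pi_perm free _ i_h.
  have /andP[h_t _] : uniq (h :: t) by rewrite (perm_uniq pi_perm) iota_uniq.
  exact/rectangularP/interleaving_free_rho_twin.
have pi_pos : {in pi, forall y, 1 <= y}.
  by move=> y; rewrite (perm_mem pi_perm) mem_iota => /andP[].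
have rect_rho1 j : j <= 2 -> rectangular (rho 1 j pi).
  by move=> le_j2; apply/rectangularP/interleaving_free_rho_min.
split=> [|_ _|pi_gt0 _|pi_gt0].
- exact: rect_rho1.
- exact: rect_rho1.
- by apply: rect_rho_head; rewrite ?eqxx.
- by apply: rect_rho_head; rewrite ?eqxx ?orbT.
Qed.
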